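(* Let $\Gamma\subset(\mathbb{RP}^1)^m$ be a real EPBQ-curve, and let $a_{jl},b_{jl},e_{jl}$ be the coefficients of its defining relations. Suppose that there exist indices $j\ne l$ such that the four numbers $a_{jl}$, $-b_{jl}$, $-b_{lj}$, $e_{jl}$ are either all positive or all negative, and either $a_{jl}e_{jl}\ge 1$ or $b_{jl}b_{lj}\ge 1$. Then $\Gamma$ is not realisable.
   Context: A real EPBQ-curve is an irreducible real algebraic curve $\Gamma\subset(\mathbb{RP}^1)^m$ (coordinates $z_1,\dots,z_m$) such that (i) for each $j\ne l$, $a_{jl}z_j^2z_l^2+b_{jl}z_j^2-2z_jz_l+b_{lj}z_l^2+e_{jl}=0$ on $\Gamma$ with real coefficients; (ii) no $z_j$ is identically $0$ or $\infty$ on $\Gamma$; (iii) for $j\ne l$, $z_j,z_l$ are neither directly nor inversely proportional on $\Gamma$. The coefficients are uniquely determined, with $a_{jl}=a_{lj}$, $e_{jl}=e_{lj}$. $\Gamma$ is realisable if there exist $n\ge3$, a decomposition $[n]=I_1\sqcup\dots\sqcup I_m$ into nonempty sets ($p\in I_{j(p)}$), nonzero reals $\lambda_1,\dots,\lambda_n$ with $\lambda_p\ne\pm\lambda_q$ whenever $p\ne q$, $j(p)=j(q)$, and reals $g_{pq}=g_{qp}$ for $p\ne q$, $j(p)=j(q)$, such that the matrices $G=(g_{pq})$, $H=(h_{pq})$ defined by $g_{pp}=h_{pp}=1$; $h_{pq}=\frac{2\lambda_p(\lambda_pg_{pq}-\lambda_q)}{\lambda_p^2-\lambda_q^2}$ if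 $p\ne q$, $j(p)=j(q)$; and, if $j(p)\ne j(q)$, $g_{pq}=\frac12\left(-\frac{a_{j(p)j(q)}}{\lambda_p\lambda_q}+\frac{\lambda_qb_{j(p)j(q)}}{\lambda_p}+\frac{\lambda_pb_{j(q)j(p)}}{\lambda_q}-\lambda_p\lambda_qe_{j(p)j(q)}\right)$, $h_{pq}=\frac{\lambda_pb_{j(q)j(p)}}{\lambda_q}-\lambda_p\lambda_qe_{j(p)j(q)}$, satisfy one of: (S) $G$ positive definite; (E) $G$ degenerate positive semidefinite with all principal minors of sizes $2,\dots,n-1$ strictly positive and no row of $H$ a linear combination of rows of $G$; (L) $G$ non-degenerate with negative index of inertia $1$, all principal minors of sizes $2,\dots,n-1$ strictly positive, and $\sum_{q,r}g^{qr}h_{pq}h_{pr}<0$ for all $p$, where $(g^{qr})=G^{-1}$. *)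

From HB Require Import structures.
From mathcomp Require Import all_boot all_order all_algebra.
Set Warnings "-notation-overridden,-ambiguous-paths".
From mathcomp Require Import reals.
Set Implicit Arguments. Unset Strict Implicit. Unset Printing Implicit Defensive.
Import Order.TTheory GRing.Theory Num.Theory.
Local Open Scope ring_scope.

Section EPBQ.
Variable R : realType.

Definition qform n (G : 'M[R]_n) (v : 'rV[R]_n) : R := (v *m G *m v^T) 0 0.

Definition posdef n (G : 'M[R]_n) : Prop :=
  forall v : 'rV[R]_n, v != 0 -> 0 < qform G v.

Definition possemidef n (G : 'M[R]_n) : Prop :=
  forall v : 'rV[R]_n, 0 <= qform G v.

Definition principal_submx n (G : 'M[R]_n) (S : {set 'I_n}) : 'M[R]_#|S| :=
  \matrix_(i < #|S|, j < #|S|) G (enum_val i) (enum_val j).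

Definition minors_pos n (G : 'M[R]_n) : Prop :=
  forall S : {set 'I_n}, (2 <= #|S|)%N -> (#|S| <= n.-1)%N ->
    0 < \det (principal_submx G S).

Definition negdef_on n k (G : 'M[R]_n) (V : 'M[R]_(k, n)) : Prop :=
  forall u : 'rV[R]_k, u != 0 -> qform G (u *m V) < 0.

Definition neg_index_is n (G : 'M[R]_n) (k : nat) : Prop :=
  (exists V : 'M[R]_(k, n), row_free V /\ negdef_on G V) /\
  (forall V : 'M[R]_(k.+1, n), row_free V -> ~ negdef_on G V).

Variables (m : nat) (a b e : 'I_m -> 'I_m -> R).

(* The matrices G and H built from the data
   n, decomposition jf : [n] -> [m] (p \in I_{jf p}), lam, g. *)
Definition Gmx n (jf : 'I_n -> 'I_m) (lam : 'I_n -> R)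
  (g : 'I_n -> 'I_n -> R) : 'M[R]_n :=
  \matrix_(p, q)
    if p == q then 1
    else if jf p == jf q then g p q
    else (- a (jf p) (jf q) / (lam p * lam q)
          + lam q * b (jf p) (jf q) / lam p
          + lam p * b (jf q) (jf p) / lam q
          - lam p * lam q * e (jf p) (jf q)) / 2.

Definition Hmx n (jf : 'I_n -> 'I_m) (lam : 'I_n -> R)
  (g : 'I_n -> 'I_n -> R) : 'M[R]_n :=
  \matrix_(p, q)
    if p == q then 1
    else if jf p == jf q then
      2 * lam p * (lam p * g p q - lam q) / (lam p ^+ 2 - lam q ^+ 2)
    else lam p * b (jf q) (jf p) / lam q - lam p * lam q * e (jf p) (jf q).

Definition caseS n (G : 'M[R]_n) : Prop := posdef G.

Definition caseE n (G H : 'M[R]_n) : Prop :=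
  [/\ \det G = 0, possemidef G, minors_pos G &
      forall p : 'I_n, ~~ (row p H <= G)%MS].

Definition caseL n (G H : 'M[R]_n) : Prop :=
  [/\ \det G != 0, neg_index_is G 1, minors_pos G &
      forall p : 'I_n,
        \sum_(q < n) \sum_(r < n) invmx G q r * H p q * H p r < 0].

Definition realisable : Prop :=
  exists (n : nat) (jf : 'I_n -> 'I_m) (lam : 'I_n -> R)
         (g : 'I_n -> 'I_n -> R),
    (3 <= n)%N /\ [/\
        (forall j : 'I_m, exists p : 'I_n, jf p = j),
        (forall p, lam p != 0),
        (forall p q, p != q -> jf p = jf q ->
             lam p != lam q /\ lam p != - lam q),
        (forall p q, p != q -> jf p = jf q -> g p q = g q p) &
        (let G := Gmx jf lam g in let H := Hmx jf lam g in
         caseS G \/ caseE G H \/ caseL G H)].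

End EPBQ.

(* Pick p in I_j and q in I_l.  The 2x2 principal submatrix of G on {p, q}
   has unit diagonal and off-diagonal entry
   (- a/(xy) + y b_jl/x + x b_lj/y - xy e)/2  with x = lam p, y = lam q.
   The sign condition makes the four terms of that sum have the same sign,
   and AM-GM applied to the pairs (a, e xy) or (b_jl y^2, b_lj x^2) shows that
   its absolute value exceeds 1.  Hence this 2x2 minor is negative, which rules
   out the cases (E) and (L), and G is indefinite on span(e_p, e_q), which
   rules out (S). *)
From HB Require Import structures.
Set Warnings "-notation-overridden,-ambiguous-paths".
From mathcomp Require Import all_boot all_order all_algebra.
From mathcomp Require Import reals.
From mathcomp Require Import ring lra.
Set Implicit Arguments. Unset Strict Implicit. Unset Printing Implicit Defensive.
Import Order.TTheory GRing.Theory Num.Theory.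
Local Open Scope ring_scope.

Lemma det_mx2 (R : comNzRingType) (A : 'M[R]_2) :
  \det A = A 0 0 * A 1 1 - A 0 1 * A 1 0.
Proof.
rewrite (expand_det_row _ 0) !big_ord_recl big_ord0 /cofactor !det_mx11 !mxE /=.
have -> : lift (0 : 'I_2) (0 : 'I_1) = 1 by apply/val_inj.
have -> : lift (1 : 'I_2) (0 : 'I_1) = 0 by apply/val_inj.
have -> : (ord0 : 'I_2) = 0 by apply/val_inj.
rewrite /bump /= expr0 expr1; ring.
Qed.

Section PrincipalPair.
Variables (R : realType) (n : nat) (G : 'M[R]_n) (p q : 'I_n).
Hypothesis neq_pq : p != q.

(* Stated for an arbitrary size [k] because [#|[set p; q]|] is only
   propositionally equal to [2]. *)
Let det_pair_reindex k (f : 'I_k -> 'I_n) :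
  k = 2%N -> (forall i, f i \in [set p; q]) -> injective f ->
  \det (\matrix_(i < k, j < k) G (f i) (f j)) = G p p * G q q - G p q * G q p.
Proof.
move=> k2; subst k => f_pq f_inj; rewrite det_mx2 !mxE.
have f01 : f 0 != f 1 by apply/eqP => /f_inj.
move: (f_pq 0) (f_pq 1) f01; rewrite !in_set2.
by case/orP => /eqP ->; case/orP => /eqP ->; rewrite ?eqxx //= => _; ring.
Qed.

Lemma det_principal_submx_pair :
  \det (principal_submx G [set p; q]) = G p p * G q q - G p q * G q p.
Proof.
apply: det_pair_reindex; last exact: enum_val_inj; last exact: enum_valP.
by rewrite cards2 neq_pq.
Qed.

Lemma minors_pos_pair : (2 < n)%N -> minors_pos G ->
  G p q * G q p < G p p * G q q.
Proof.
move=> n_gt2 hG; have card_pq : #|[set p; q]| = 2%N by rewrite cards2 neq_pq.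
rewrite -subr_gt0 -det_principal_submx_pair; apply: hG; rewrite card_pq //.
by rewrite -ltnS (ltn_predK n_gt2).
Qed.

Lemma qform_delta_pair (c : R) :
  qform G (delta_mx 0 p + c *: delta_mx 0 q)
  = G p p + c * (G p q + G q p) + c ^+ 2 * G q q.
Proof.
have qdelta i j : (delta_mx 0 i : 'rV[R]_n) *m G *m (delta_mx 0 j)^T
                  = (G i j)%:M.
  by apply/matrixP => ? ?; rewrite !ord1 trmx_delta -rowE -colE !mxE.
rewrite /qform linearD /= linearZ /= !mulmxDl !mulmxDr -!scalemxAl -!scalemxAr.
by rewrite !qdelta !mxE /=; ring.
Qed.

Lemma posdef_pair (c : R) : posdef G ->
  0 < G p p + c * (G p q + G q p) + c ^+ 2 * G q q.
Proof.
move=> hG; rewrite -qform_delta_pair; apply: hG; apply/eqP.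
move/(congr1 (fun v : 'rV[R]_n => v 0 p)); rewrite !mxE !eqxx (negbTE neq_pq) /=.
by rewrite mulr0 addr0; apply/eqP; rewrite oner_eq0.
Qed.

End PrincipalPair.

Section CrossEntry.
Variable R : realType.
Implicit Types (A B C E x y : R).

Definition cross_entry A B C E x y : R :=
  (- A / (x * y) + y * B / x + x * C / y - x * y * E) / 2.

Lemma cross_entry_swap A B C E x y :
  cross_entry A B C E x y = cross_entry A C B E y x.
Proof. by rewrite /cross_entry [y * x]mulrC; ring. Qed.

Lemma cross_entryN A B C E x y :
  cross_entry (- A) (- B) (- C) (- E) x y = - cross_entry A B C E x y.
Proof. by rewrite /cross_entry; ring. Qed.

(* AM-GM on (A, E X Y) in the first case and on (B Y, C X) in the second. *)
Lemma amgm_four_terms A B C E (X Y : R) :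
  0 < A -> 0 < B -> 0 < C -> 0 < E -> 0 < X -> 0 < Y ->
  1 <= A * E \/ 1 <= B * C ->
  4 * (X * Y) < (A + B * Y + C * X + E * (X * Y)) ^+ 2.
Proof.
move=> A_gt0 B_gt0 C_gt0 E_gt0 X_gt0 Y_gt0 hAEBC.
have XY_gt0 : 0 < X * Y by rewrite mulr_gt0.
have BC_gt0 : 0 < B * Y + C * X by rewrite addr_gt0 // mulr_gt0.
have AE_gt0 : 0 < A + E * (X * Y) by rewrite addr_gt0 // mulr_gt0.
case: hAEBC => h1.
- have : 0 <= (A - E * (X * Y)) ^+ 2 by rewrite sqr_ge0.
  have : 0 <= (A * E - 1) * (X * Y) by rewrite mulr_ge0 ?subr_ge0 // ltW.
  nra.
- have : 0 <= (B * Y - C * X) ^+ 2 by rewrite sqr_ge0.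
  have : 0 <= (B * C - 1) * (X * Y) by rewrite mulr_ge0 ?subr_ge0 // ltW.
  nra.
Qed.

Lemma cross_entry_sqr_gt1 A B C E x y :
  0 < A -> B < 0 -> C < 0 -> 0 < E -> x != 0 -> y != 0 ->
  1 <= A * E \/ 1 <= B * C ->
  1 < cross_entry A B C E x y ^+ 2.
Proof.
move=> A_gt0 B_lt0 C_lt0 E_gt0 x_neq0 y_neq0 hAEBC.
have X_gt0 : 0 < x ^+ 2 by rewrite exprn_even_gt0.
have Y_gt0 : 0 < y ^+ 2 by rewrite exprn_even_gt0.
have := @amgm_four_terms A (- B) (- C) E _ _ A_gt0 _ _ E_gt0 X_gt0 Y_gt0.
rewrite !oppr_gt0 mulrNN => /(_ B_lt0 C_lt0 hAEBC).
set c := cross_entry A B C E x y.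
have -> : A + - B * y ^+ 2 + - C * x ^+ 2 + E * (x ^+ 2 * y ^+ 2)
          = - (2 * x * y) * c.
  by rewrite /c /cross_entry; field; rewrite x_neq0 y_neq0.
clearbody c; rewrite exprMn sqrrN !exprMn.
have : 0 < (x * y) ^+ 2 by rewrite exprMn mulr_gt0.
nra.
Qed.

End CrossEntry.

Lemma Gmx_cross_entry (R : realType) m (a b e : 'I_m -> 'I_m -> R) n
    (jf : 'I_n -> 'I_m) lam g p q :
  jf p != jf q ->
  Gmx a b e jf lam g p q
  = cross_entry (a (jf p) (jf q)) (b (jf p) (jf q)) (b (jf q) (jf p))
                (e (jf p) (jf q)) (lam p) (lam q).
Proof.
move=> neq_j; have neq_pq : p != q by apply: contraNneq neq_j => ->.
by rewrite mxE (negbTE neq_pq) (negbTE neq_j).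
Qed.

Theorem mainTheorem7 (R : realType) (m : nat) (a b e : 'I_m -> 'I_m -> R)
  (a_sym : forall j l : 'I_m, j != l -> a j l = a l j)
  (e_sym : forall j l : 'I_m, j != l -> e j l = e l j)
  (j l : 'I_m) (hjl : j != l)
  (hsign : (0 < a j l /\ 0 < - b j l /\ 0 < - b l j /\ 0 < e j l) \/
           (a j l < 0 /\ - b j l < 0 /\ - b l j < 0 /\ e j l < 0))
  (hprod : 1 <= a j l * e j l \/ 1 <= b j l * b l j) :
  ~ realisable a b e.
Proof.
case=> n [jf [lam [g [n_ge3 [jf_onto lam_neq0 _ _ hcase]]]]].
have [[p jf_p] [q jf_q]] := (jf_onto j, jf_onto l).
have neq_jf : jf p != jf q by rewrite jf_p jf_q.
have neq_pq : p != q by apply: contraNneq neq_jf => ->.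
set G := Gmx a b e jf lam g in hcase.
have G_diag r : G r r = 1 by rewrite mxE eqxx.
have G_sym : G q p = G p q.
  rewrite !Gmx_cross_entry //; last by rewrite eq_sym.
  by rewrite cross_entry_swap jf_p jf_q -a_sym // -e_sym.
have G_pq_sqr : 1 < G p q ^+ 2.
  rewrite Gmx_cross_entry // jf_p jf_q.
  case: hsign => [[? [? [? ?]]] | [? [? [? ?]]]].
  - by apply: cross_entry_sqr_gt1; rewrite // -oppr_gt0.
  - rewrite -sqrrN -cross_entryN.
    by apply: cross_entry_sqr_gt1; rewrite ?oppr_gt0 ?mulrNN.
have no_minors : ~ minors_pos G.
  move/(minors_pos_pair neq_pq n_ge3); rewrite G_sym !G_diag mulr1; nra.
case: hcase => [hS | [[_ _ /no_minors] | [_ _ /no_minors]]] //.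
have := posdef_pair neq_pq 1 hS; have := posdef_pair neq_pq (-1) hS.
rewrite G_sym !G_diag; nra.
Qed.
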